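(* Let $w=a_0a_1\cdots a_k$ and $w'=b_0b_1\cdots b_k$ be admissible $(k+1)$-words, let $p$ be the fundamental period of $w$, and suppose there is a non-negative integer $i_0$ which is the smallest non-negative integer with $b_0\cdots b_{k-i_0}=a_{i_0}\cdots a_k$. Let $i$ be a positive integer with $i\le k$ and $b_0\cdots b_{k-i}=a_i\cdots a_k$. Then either $p$ divides $i-i_0$ or $i\ge k+2-p$.
   Context: Let $\mathcal{A}$ be a finite alphabet and $T=(T_{x,y})$ a square matrix indexed by $\mathcal{A}$ with entries in $\{0,1\}$. An admissible $m$-word is a string $u_1\cdots u_m$ with $T_{u_{i+1},u_i}=1$ for all $i$. For an admissible $k$-word $u=u_1\cdots u_k$, $h(u)$ is the least non-negative integer $h$ such that $u$ is the only admissible $k$-word beginning with $u_1\cdots u_{h+1}$. For an admissible $(k+1)$-word $w=a_0a_1\cdots a_k$, let $d=h(a_1\cdots a_k)$; the fundamental period of $w$ is the smallest integer $p$ with $1\le p\le d$ and $a_0a_1\cdots a_{k-p}=a_p\cdots a_k$, and $p=k+1$ if no such integer exists. *)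

From mathcomp Require Import all_boot.
Set Implicit Arguments. Unset Strict Implicit. Unset Printing Implicit Defensive.

Section Words.
Variables (A : finType) (T : A -> A -> bool).

(* u_1 ... u_m is admissible iff T u_{i+1} u_i = 1 for all i;
   words are sequences, u_1 being the head. *)
Definition admissible (u : seq A) : bool := sorted (fun x y => T y x) u.

Definition uniq_depth (u : seq A) (h : nat) : bool :=
  [forall v : (size u).-tuple A,
     (admissible v && (take h.+1 v == take h.+1 u)) ==> (val v == u)].

(* h(u): the least such h (h = size u always qualifies, so the search
   over 0..size u finds it). *)
Definition hval (u : seq A) : nat := find (uniq_depth u) (iota 0 (size u).+1).

(* fundamental period of w = a_0 a_1 ... a_k (k = size w - 1):
   smallest p with 1 <= p <= d := h(a_1...a_k) and
   a_0 ... a_{k-p} = a_p ... a_k, and k+1 if there is none. *)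
Definition fund_period (w : seq A) : nat :=
  let k := (size w).-1 in
  let d := hval (behead w) in
  let l := find (fun p => take (k.+1 - p) w == drop p w) (iota 1 d) in
  if l < d then l.+1 else k.+1.

End Words.

(* The suffix a_{i0} ... a_k of w is matched by two prefixes of w', so it has
   period q = i - i0 besides the period p inherited from w.  When
   p + q <= k + 1 - i0, i.e. i <= k + 1 - p, the (weak) Fine-Wilf theorem makes
   gcd(p, q) a period of this suffix; as the suffix contains a full window of
   length p of the p-periodic word w, gcd(p, q) is a period of the whole of w.
   Minimality of the fundamental period then forces p = gcd(p, q), so p | q. *)

From mathcomp Require Import all_boot.
From mathcomp Require Import zify.

Set Implicit Arguments.
Unset Strict Implicit.
Unset Printing Implicit Defensive.

Section Periods.
Variable T : Type.

Definition has_period (f : nat -> T) (n r : nat) :=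
  forall t, t + r < n -> f t = f (t + r).

Lemma has_period_subn (f : nat -> T) n p q :
  p <= q -> p + q <= n -> has_period f n p -> has_period f n q ->
  has_period f n (q - p).
Proof.
move=> le_pq le_pqn fp fq t lt_tn.
have [lt_tqn | le_nt] := ltnP (t + q) n.
  rewrite fq // (_ : t + q = t + (q - p) + p); last by lia.
  by rewrite -fp //; lia.
have -> : t = t - p + p by lia.
rewrite -fp; last by lia.
by rewrite fq; [congr f; lia | lia].
Qed.

(* Weak Fine-Wilf theorem (p + q <= n rather than p + q - gcd p q <= n), by
   Euclid's algorithm on the periods. *)
Lemma has_period_gcdn (f : nat -> T) n p q :
  p + q <= n -> has_period f n p -> has_period f n q ->
  has_period f n (gcdn p q).
Proof.
elim: {p q}(p + q) {-2}p {-2}q (leqnn (p + q)) => [|m IHm] p q.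
  by move=> p0q0; have [-> ->] : p = 0 /\ q = 0 by lia.
wlog le_pq : p q / p <= q => [WLOG | le_pqm le_pqn fp fq].
  case: (leqP p q) => [|/ltnW le_qp]; first exact: WLOG.
  by rewrite gcdnC => *; apply: WLOG => //; lia.
have [-> | p_gt0] := posnP p; first by rewrite gcd0n.
rewrite -[q](subnK le_pq) gcdnDr.
by apply: IHm; [lia | lia | | exact: has_period_subn].
Qed.

Lemma has_period_mod (f : nat -> T) n p x y :
  has_period f n p -> x < n -> y < n -> x = y %[mod p] -> f x = f y.
Proof.
move=> fp; wlog le_xy : x y / x <= y => [WLOG | lt_xn lt_yn /eqP].
  case: (leqP x y) => [|/ltnW le_yx] lt_xn lt_yn exy; first exact: WLOG.
  by symmetry; apply: WLOG => //; rewrite exy.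
rewrite eq_sym eqn_mod_dvd // => /dvdnP[m def_m]; move: lt_yn.
have {def_m le_xy}-> : y = x + m * p by lia.
elim: m => [|m IHm]; first by rewrite addn0.
rewrite mulSn (addnC p) addnA => lt_n.
rewrite IHm; last by lia.
by rewrite fp //; lia.
Qed.

Lemma has_period_shift (f : nat -> T) n a p :
  has_period f n p -> has_period (fun t => f (a + t)) (n - a) p.
Proof. by move=> fp t lt_t; rewrite addnA fp //; lia. Qed.

(* Every residue mod p occurs in the window [a, a + p), so a period g of the
   restriction to [a, n) propagates to the whole p-periodic range. *)
Lemma has_period_from_window (f : nat -> T) n a p g :
  0 < p -> a + p + g <= n -> has_period f n p ->
  has_period (fun t => f (a + t)) (n - a) g -> has_period f n g.
Proof.
move=> p_gt0 le_apgn fp fg t lt_tn.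
have le_ap : a <= p * a by rewrite leq_pmull.
pose r := a + (t + p * a - a) %% p.
have lt_ra : r < a + p by rewrite ltn_add2l ltn_pmod.
have le_ar : a <= r by rewrite leq_addr.
have def_r : r = t %[mod p].
  rewrite /r modnDmr subnKC; last exact: leq_trans le_ap (leq_addl _ _).
  by rewrite addnC mulnC modnMDl.
clearbody r.
have -> : f t = f r by apply: has_period_mod fp _ _ (esym def_r); lia.
have -> : f (t + g) = f (r + g).
  by apply: (has_period_mod fp); [lia | lia | rewrite -modnDml -def_r modnDml].
have := fg (r - a); rewrite addnA subnKC //; apply; lia.
Qed.

Variable x0 : T.

Lemma nth_take_eq_drop (s s' : seq T) j t :
  take (size s - j) s' = drop j s -> t < size s - j ->
  nth x0 s' t = nth x0 s (j + t).
Proof.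
by move=> /(congr1 (nth x0 ^~ t)) + lt_t; rewrite nth_take // nth_drop.
Qed.

Lemma take_eq_drop_period (s : seq T) r :
  take (size s - r) s = drop r s <-> has_period (nth x0 s) (size s) r.
Proof.
split=> [s_r t lt_t | s_r].
  by rewrite addnC; apply: nth_take_eq_drop s_r _; lia.
apply: (eq_from_nth (x0 := x0)) => [|t]; first by rewrite size_takel ?size_drop ?leq_subr.
rewrite size_takel ?leq_subr // => lt_t.
by rewrite nth_take // nth_drop addnC s_r //; lia.
Qed.

Lemma take_eq_drop_shift_period (s s' : seq T) j i :
  j <= i -> take (size s - j) s' = drop j s -> take (size s - i) s' = drop i s ->
  has_period (fun t => nth x0 s (j + t)) (size s - j) (i - j).
Proof.
move=> le_ji s'_j s'_i t lt_t.
rewrite -(nth_take_eq_drop s'_j); last by lia.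
by rewrite (nth_take_eq_drop s'_i); [congr nth; lia | lia].
Qed.

End Periods.

Section FundamentalPeriod.
Variables (A : finType) (T : A -> A -> bool).

Lemma fund_period_spec (w : seq A) : 0 < size w ->
  let p := fund_period T w in
  p = size w \/
  [/\ 0 < p, p <= hval T (behead w), take (size w - p) w = drop p w &
      forall r, 0 < r -> r <= hval T (behead w) ->
        take (size w - r) w = drop r w -> p <= r].
Proof.
move=> w_gt0 /=; rewrite /fund_period prednK //.
set d := hval T (behead w); set P := fun p => _; set l := find P _.
case: ifP => [lt_ld | _]; [right | by left].
have Pl : P l.+1.
  have := nth_find 0 (_ : has P (iota 1 d)).
  by rewrite nth_iota // add1n; apply; rewrite has_find size_iota.
split=> //; first exact/eqP.
move=> r r_gt0 le_rd w_r; rewrite ltnNge; apply/negP => lt_rl.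
have lt_r1l : r.-1 < l by lia.
have := before_find 0 lt_r1l; rewrite nth_iota; last by lia.
by rewrite add1n prednK // /P w_r eqxx.
Qed.

End FundamentalPeriod.

Theorem lemma4p1 (A : finType) (T : A -> A -> bool) (k : nat)
  (w w' : seq A) (i0 : nat) :
  size w = k.+1 -> admissible T w ->
  size w' = k.+1 -> admissible T w' ->
  (* b_0 ... b_{k-i0} = a_{i0} ... a_k *)
  take (k.+1 - i0) w' = drop i0 w ->
  (* i0 is the smallest such *)
  (forall j, j < i0 -> take (k.+1 - j) w' <> drop j w) ->
  forall i : nat, 0 < i -> i <= k ->
  take (k.+1 - i) w' = drop i w ->
  fund_period T w %| (i - i0) \/ k.+2 - fund_period T w <= i.
Proof.
move=> size_w _ _ _ w'_i0 min_i0 i i_gt0 _ w'_i.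
have x0 : A by move: size_w; case: (w) => // x0.
have le_i0i : i0 <= i by rewrite leqNgt; apply/negP => /min_i0.
have w_gt0 : 0 < size w by rewrite size_w.
case: (fund_period_spec T w_gt0) => /= [->|]; first by right; lia.
set p := fund_period T w => -[p_gt0 le_pd /(take_eq_drop_period x0) wp min_p].
have [|lt_i_kp] := leqP (k.+2 - p) i; [by right | left].
have [-> | q_gt0] := posnP (i - i0); first exact: dvdn0.
rewrite -size_w in w'_i0 w'_i.
have suffix_p := has_period_shift (a := i0) wp.
have suffix_q := take_eq_drop_shift_period x0 le_i0i w'_i0 w'_i.
have le_pq : p + (i - i0) <= size w - i0 by lia.
have := has_period_gcdn le_pq suffix_p suffix_q.
set g := gcdn p (i - i0) => suffix_g.
have g_gt0 : 0 < g by rewrite gcdn_gt0 p_gt0.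
have le_gq : g <= i - i0 by rewrite dvdn_leq ?dvdn_gcdr.
have le_gp : g <= p by rewrite dvdn_leq ?dvdn_gcdl.
have le_window : i0 + p + g <= size w by lia.
have wg := has_period_from_window p_gt0 le_window wp suffix_g.
have le_pg : p <= g.
  by apply: min_p (leq_trans le_gp le_pd) _; rewrite // (take_eq_drop_period x0).
by rewrite (_ : p = g) ?dvdn_gcdr //; apply/eqP; rewrite eqn_leq le_pg le_gp.
Qed.
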